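(* Let $\gamma_a,\gamma_s>0$, $\lambda\ge0$, $q>0$, $\sigma_B>0$, $\varepsilon_a\in(0,2)$, and let $\beta_a,\beta_s:\mathbb R\to\mathbb R$ be globally Lipschitz continuous with $\beta_a\ge0$, $\beta_s>0$. If $T_a^{(0)}\ge0$ and $T_s^{(0)}\ge0$, then the maximal solution of \[ \begin{cases} \gamma_a T_a'=-\lambda(T_a-T_s)+\varepsilon_a\sigma_B|T_s|^3T_s-2\varepsilon_a\sigma_B|T_a|^3T_a+q\beta_a(T_a),\\ \gamma_s T_s'=-\lambda(T_s-T_a)-\sigma_B|T_s|^3T_s+\varepsilon_a\sigma_B|T_a|^3T_a+q\beta_s(T_s),\\ T_a(0)=T_a^{(0)},\quad T_s(0)=T_s^{(0)} \end{cases} \] exists on $[0,+\infty)$. *)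

From Stdlib Require Export Reals.
From Coquelicot Require Export Coquelicot.
Open Scope R_scope.

Definition globally_lipschitz (f : R -> R) : Prop :=
  exists L : R, 0 <= L /\ forall x y : R, Rabs (f x - f y) <= L * Rabs (x - y).

(* Cut the vector field off outside the square [0, M]^2.  The truncated field is globally
   Lipschitz and bounded, so Picard iteration, made a contraction on the whole line by
   Bielecki's weight, yields a global solution.  This solution stays in the closed positive
   quadrant, because on each axis the field points inward.  The weighted energy
   gamma_a T_a + c gamma_s T_s, with eps_a < c < 2, decreases as soon as T_a + T_s is large,
   because the negative quartic radiation terms then dominate everything else; hence the
   energy stays below a level K fixed by the initial data.  Choosing M above the bound that K
   imposes on each component, the cut-off is never active, and the truncated solution solves
   the original system on [0, +oo). *)

From Stdlib Require Import Reals Lra Lia.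
From Coquelicot Require Import Coquelicot.
Open Scope R_scope.

Definition lipschitz_with (f : R -> R) (K : R) : Prop :=
  forall x y : R, Rabs (f x - f y) <= K * Rabs (x - y).

Definition lipschitz2_with (G : R -> R -> R) (L : R) : Prop :=
  forall x y x' y' : R,
    Rabs (G x y - G x' y') <= L * (Rabs (x - x') + Rabs (y - y')).

Lemma lipschitz_with_ge0 f K : lipschitz_with f K -> 0 <= K.
Proof.
  intros Hf. specialize (Hf 1 0).
  rewrite Rminus_0_r, Rabs_R1, Rmult_1_r in Hf.
  pose proof (Rabs_pos (f 1 - f 0)). lra.
Qed.

Lemma lipschitz2_with_ge0 G L : lipschitz2_with G L -> 0 <= L.
Proof.
  intros HG. apply (lipschitz_with_ge0 (fun x => G x 0)).
  intros x y. specialize (HG x 0 y 0).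
  rewrite Rminus_0_r, Rabs_R0, Rplus_0_r in HG. exact HG.
Qed.

Lemma lipschitz_with_continuous f K : lipschitz_with f K -> forall t, continuous f t.
Proof.
  intros Hf t. pose proof (lipschitz_with_ge0 f K Hf) as HK.
  apply continuity_pt_filterlim. intros eps Heps.
  exists (eps / (K + 1)). split; [apply Rdiv_lt_0_compat; lra|].
  intros s [_ Hs]. simpl in *. unfold R_dist in *.
  apply (Rle_lt_trans _ (K * Rabs (s - t))); [apply Hf|].
  apply (Rle_lt_trans _ (K * (eps / (K + 1)))); [apply Rmult_le_compat_l; lra|].
  assert (0 < eps / (K + 1)) by (apply Rdiv_lt_0_compat; lra).
  replace eps with ((K + 1) * (eps / (K + 1))) at 2 by (field; lra).
  lra.
Qed.

Lemma lipschitz2_with_comp G L u v K :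
  lipschitz2_with G L -> lipschitz_with u K -> lipschitz_with v K ->
  lipschitz_with (fun s => G (u s) (v s)) (2 * L * K).
Proof.
  intros HG Hu Hv s t. pose proof (lipschitz2_with_ge0 G L HG).
  eapply Rle_trans; [apply HG|].
  specialize (Hu s t). specialize (Hv s t). nra.
Qed.

Lemma ex_RInt_continuous_R (g : R -> R) a b :
  (forall s, continuous g s) -> ex_RInt g a b.
Proof. intros Hg. apply (@ex_RInt_continuous R_CompleteNormedModule). intros; apply Hg. Qed.

Lemma RInt_lipschitz (g : R -> R) x0 B :
  (forall s, continuous g s) -> (forall s, Rabs (g s) <= B) ->
  lipschitz_with (fun t => x0 + RInt g 0 t) B.
Proof.
  intros Hc Hb s t.
  assert (Hchasles : x0 + RInt g 0 s - (x0 + RInt g 0 t) = RInt g t s).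
  { rewrite <- (RInt_Chasles g 0 t s) by apply ex_RInt_continuous_R, Hc.
    unfold plus; simpl; ring. }
  rewrite Hchasles, Rmult_comm.
  apply (norm_RInt_le_const_abs g t s); [intros; apply Hb|].
  exact (RInt_correct g t s (ex_RInt_continuous_R g t s Hc)).
Qed.

Lemma is_derive_RInt_0 (g : R -> R) x0 t : (forall s, continuous g s) ->
  is_derive (fun b => x0 + RInt g 0 b) t (g t).
Proof.
  intros Hc.
  assert (HFTC : is_derive (fun b => RInt g 0 b) t (g t)).
  { apply (is_derive_RInt g (fun b => RInt g 0 b) 0 t); [|apply Hc].
    apply filter_forall. intros b.
    exact (RInt_correct g 0 b (ex_RInt_continuous_R g 0 b Hc)). }
  pose proof (is_derive_plus _ _ t _ _ (is_derive_const x0 t) HFTC) as Hsum.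
  unfold plus, zero in Hsum; simpl in Hsum. rewrite Rplus_0_l in Hsum. exact Hsum.
Qed.

Lemma abs_RInt_le_exp_pos (g : R -> R) K a t : 0 < a -> 0 <= t ->
  (forall s, continuous g s) -> (forall s, Rabs (g s) <= K * exp (a * Rabs s)) ->
  Rabs (RInt g 0 t) <= K * exp (a * t) / a.
Proof.
  intros Ha Ht Hc Hb.
  assert (Hprim : is_RInt (fun s => K * exp (a * s)) 0 t
                    (minus (K * exp (a * t) / a) (K * exp (a * 0) / a))).
  { apply (is_RInt_derive (fun s => K * exp (a * s) / a)); intros x _.
    - auto_derive; [easy | field; lra].
    - apply (ex_derive_continuous (V := R_NormedModule)). auto_derive. easy. }
  assert (HK : 0 <= K).
  { specialize (Hb 0). pose proof (Rabs_pos (g 0)). pose proof (exp_pos (a * Rabs 0)). nra. }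
  apply (Rle_trans _ (minus (K * exp (a * t) / a) (K * exp (a * 0) / a))).
  - apply (norm_RInt_le g (fun s => K * exp (a * s)) 0 t); [easy | | |easy].
    + intros s Hs. rewrite <- (Rabs_pos_eq s) at 2 by lra. apply Hb.
    + exact (RInt_correct g 0 t (ex_RInt_continuous_R g 0 t Hc)).
  - unfold minus, plus, opp; simpl. rewrite Rmult_0_r, exp_0.
    assert (0 <= K / a) by (apply Rdiv_le_0_compat; lra).
    unfold Rdiv in *. lra.
Qed.

Lemma abs_RInt_le_exp (g : R -> R) K a t : 0 < a ->
  (forall s, continuous g s) -> (forall s, Rabs (g s) <= K * exp (a * Rabs s)) ->
  Rabs (RInt g 0 t) <= K * exp (a * Rabs t) / a.
Proof.
  intros Ha Hc Hb. destruct (Rle_or_lt 0 t) as [Ht | Ht].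
  - rewrite (Rabs_pos_eq t) by lra. now apply abs_RInt_le_exp_pos.
  -     assert (Hrefl : RInt g 0 t = RInt (fun y => - g (- y)) 0 (- t)).
    { replace t with (-1 * - t + 0) at 1 by ring.
      replace 0 with (-1 * 0 + 0) at 1 by ring.
      rewrite <- RInt_comp_lin by (apply ex_RInt_continuous_R, Hc).
      apply RInt_ext. intros y _. unfold scal; simpl; unfold mult; simpl.
      replace (-1 * y + 0) with (- y) by ring. ring. }
    rewrite Hrefl, (Rabs_left t) by lra.
    apply abs_RInt_le_exp_pos; [easy | lra | |].
    + intros s. apply continuity_pt_filterlim, continuity_pt_opp.
      apply (continuity_pt_comp Ropp g).
      * apply continuity_pt_opp, continuity_pt_id.
      * apply continuity_pt_filterlim, Hc.
    + intros s. rewrite Rabs_Ropp, <- (Rabs_Ropp s). apply Hb.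
Qed.

Lemma pow_half_lt c eps : 0 < eps -> exists N : nat, c * (1 / 2) ^ N < eps.
Proof.
  intros Heps.
  assert (Habs : Rabs (1 / 2) < 1) by (rewrite Rabs_pos_eq; lra).
  destruct (pow_lt_1_zero (1 / 2) Habs (eps / (Rabs c + 1))) as [N HN].
  { apply Rdiv_lt_0_compat; [lra | pose proof (Rabs_pos c); lra]. }
  exists N. specialize (HN N (le_n N)).
  assert (Hpow : 0 <= (1 / 2) ^ N) by (apply pow_le; lra).
  rewrite Rabs_pos_eq in HN by exact Hpow.
  pose proof (Rabs_pos c). pose proof (Rle_abs c).
  assert (Hc : c * (1 / 2) ^ N <= Rabs c * (1 / 2) ^ N) by nra.
  assert (Hdiv : (Rabs c + 1) * (eps / (Rabs c + 1)) = eps) by (field; lra).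
  nra.
Qed.

Lemma le_pow_half_le0 x c : (forall n, x <= c * (1 / 2) ^ n) -> x <= 0.
Proof.
  intros Hx. destruct (Rle_or_lt x 0) as [Hle | Hpos]; [easy|].
  destruct (pow_half_lt c x Hpos) as [N HN]. specialize (Hx N). lra.
Qed.

Lemma geometric_cauchy_cvg (f : nat -> R) c :
  (forall n m, (n <= m)%nat -> Rabs (f m - f n) <= c * (1 / 2) ^ n) ->
  is_lim_seq f (real (Lim_seq f)).
Proof.
  intros Hf. apply Lim_seq_correct', ex_lim_seq_cauchy_corr.
  intros eps. destruct (pow_half_lt (2 * c) eps (cond_pos eps)) as [N HN].
  exists N. intros n m Hn Hm.
  pose proof (Hf N n Hn). pose proof (Hf N m Hm).
  replace (f n - f m) with ((f n - f N) - (f m - f N)) by ring.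
  eapply Rle_lt_trans; [apply Rabs_triang|]. rewrite Rabs_Ropp. lra.
Qed.

Lemma last_nonneg_point f T : (forall t, continuous f t) -> 0 <= f 0 -> 0 <= T ->
  exists t0, 0 <= t0 <= T /\ 0 <= f t0 /\ forall s, t0 < s <= T -> f s < 0.
Proof.
  intros Hc Hf0 HT.
  set (E := fun s => 0 <= s <= T /\ 0 <= f s).
  destruct (completeness E) as [t0 [Hub Hlub]].
  { exists T. intros s [Hs _]. lra. }
  { exists 0. split; lra. }
  assert (Ht0 : 0 <= t0 <= T).
  { split; [apply Hub; split; lra | apply Hlub; intros s [Hs _]; lra]. }
  assert (Hafter : forall s, t0 < s <= T -> f s < 0).
  { intros s Hs. destruct (Rlt_or_le (f s) 0) as [Hneg | Hnn]; [easy|].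
    assert (s <= t0) by (apply Hub; split; lra). lra. }
  exists t0. repeat split; try lra; [|exact Hafter].
  destruct (Rle_or_lt 0 (f t0)) as [Hnn | Hneg]; [easy | exfalso].
  destruct (proj2 (continuity_pt_filterlim f t0) (Hc t0) (- f t0)) as [delta [Hdelta Hnear]];
    [lra|].
  assert (Hbound : is_upper_bound E (t0 - delta / 2)).
  { intros s [Hs Hfs]. destruct (Rle_or_lt s (t0 - delta / 2)) as [Hle | Hgt]; [easy|].
    assert (Hst : s <= t0) by (apply Hub; split; easy).
    destruct (Req_dec s t0) as [-> | Hne]; [lra|].
    assert (Hclose : Rabs (f s - f t0) < - f t0).
    { apply Hnear. split; [split; [constructor | easy]|].
      simpl. unfold R_dist. rewrite Rabs_left1; lra. }
    apply Rabs_def2 in Hclose. lra. }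
  specialize (Hlub _ Hbound). lra.
Qed.

Lemma nonneg_invariant (f df : R -> R) :
  (forall t, is_derive f t (df t)) -> 0 <= f 0 ->
  (forall t, 0 <= t -> f t <= 0 -> 0 <= df t) ->
  forall T, 0 <= T -> 0 <= f T.
Proof.
  intros Hd Hf0 Hin T HT.
  destruct (Rle_or_lt 0 (f T)) as [Hnn | HfT]; [easy | exfalso].
  assert (Hc : forall t, continuous f t).
  { intros t. apply (ex_derive_continuous (V := R_NormedModule)). eexists. apply Hd. }
  destruct (last_nonneg_point f T Hc Hf0 HT) as (t0 & Ht0 & Hft0 & Hafter).
  assert (Hlt : t0 < T) by (destruct (Req_dec t0 T) as [-> | ]; lra).
  destruct (MVT_cor2 f df t0 T Hlt) as (c & Hmvt & Hct0).
  { intros c _. apply is_derive_Reals, Hd. }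
  assert (0 <= df c) by (apply Hin; [lra | left; apply Hafter; lra]).
  nra.
Qed.

Definition dist_at (p p' : (R -> R) * (R -> R)) (t : R) : R :=
  Rabs (fst p t - fst p' t) + Rabs (snd p t - snd p' t).

Lemma dist_at_ge0 p p' t : 0 <= dist_at p p' t.
Proof.
  unfold dist_at.
  pose proof (Rabs_pos (fst p t - fst p' t)). pose proof (Rabs_pos (snd p t - snd p' t)). lra.
Qed.

Lemma dist_at_sym p p' t : dist_at p p' t = dist_at p' p t.
Proof. unfold dist_at. now rewrite (Rabs_minus_sym (fst p t)), (Rabs_minus_sym (snd p t)). Qed.

Lemma dist_at_triangle p q r t : dist_at p r t <= dist_at p q t + dist_at q r t.
Proof.
  unfold dist_at.
  pose proof (Rabs_triang (fst p t - fst q t) (fst q t - fst r t)).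
  pose proof (Rabs_triang (snd p t - snd q t) (snd q t - snd r t)).
  replace (fst p t - fst r t) with (fst p t - fst q t + (fst q t - fst r t)) by ring.
  replace (snd p t - snd r t) with (snd p t - snd q t + (snd q t - snd r t)) by ring.
  lra.
Qed.

Lemma dist_at_cvg (p : nat -> (R -> R) * (R -> R)) (q r : (R -> R) * (R -> R)) t :
  is_lim_seq (fun n => fst (p n) t) (fst q t) ->
  is_lim_seq (fun n => snd (p n) t) (snd q t) ->
  is_lim_seq (fun n => dist_at (p n) r t) (dist_at q r t).
Proof.
  intros H1 H2. apply is_lim_seq_plus'; apply (is_lim_seq_abs _ (Finite _));
    apply is_lim_seq_minus'; auto using is_lim_seq_const.
Qed.

Lemma lipschitz_with_lim (f : nat -> R -> R) (g : R -> R) K :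
  (forall t, is_lim_seq (fun n => f n t) (g t)) -> (forall n, lipschitz_with (f n) K) ->
  lipschitz_with g K.
Proof.
  intros Hcvg Hf s t.
  apply (is_lim_seq_le (fun n => Rabs (f n s - f n t)) (fun _ => K * Rabs (s - t))
           (Rabs (g s - g t)) (K * Rabs (s - t)));
    [intros n; apply Hf | | apply is_lim_seq_const].
  apply (is_lim_seq_abs _ (Finite _)), is_lim_seq_minus'; apply Hcvg.
Qed.

Section Picard.

Variables (G1 G2 : R -> R -> R) (L B : R).
Hypothesis L_gt0 : 0 < L.
Hypothesis G1_lipschitz : lipschitz2_with G1 L.
Hypothesis G2_lipschitz : lipschitz2_with G2 L.
Hypothesis G_bounded : forall x y, Rabs (G1 x y) <= B /\ Rabs (G2 x y) <= B.
Variables x0 y0 : R.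

Definition picard_map (p : (R -> R) * (R -> R)) : (R -> R) * (R -> R) :=
  (fun t => x0 + RInt (fun s => G1 (fst p s) (snd p s)) 0 t,
   fun t => y0 + RInt (fun s => G2 (fst p s) (snd p s)) 0 t).

Definition picard_iter (n : nat) : (R -> R) * (R -> R) :=
  Nat.iter n picard_map (fun _ => x0, fun _ => y0).

Definition B_lipschitz (p : (R -> R) * (R -> R)) : Prop :=
  lipschitz_with (fst p) B /\ lipschitz_with (snd p) B.

Lemma B_ge0 : 0 <= B.
Proof. pose proof (Rabs_pos (G1 0 0)). pose proof (G_bounded 0 0). lra. Qed.

Lemma continuous_along G p : lipschitz2_with G L -> B_lipschitz p ->
  forall s, continuous (fun r => G (fst p r) (snd p r)) s.
Proof.
  intros HG [H1 H2]. apply (lipschitz_with_continuous _ (2 * L * B)).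
  now apply lipschitz2_with_comp.
Qed.

Lemma picard_map_lipschitz p : B_lipschitz p -> B_lipschitz (picard_map p).
Proof.
  intros Hp. split; apply RInt_lipschitz; try (apply continuous_along; assumption);
    intros s; apply G_bounded.
Qed.

Lemma picard_iter_lipschitz n : B_lipschitz (picard_iter n).
Proof.
  induction n as [|n IH]; [|now apply picard_map_lipschitz].
  pose proof B_ge0.
  split; intros s t; simpl; rewrite Rminus_diag, Rabs_R0;
    apply Rmult_le_pos; auto using Rabs_pos.
Qed.

(* Bielecki's weight [exp (4 L |t|)] turns the Picard map into a 1/2-contraction on all of R. *)
Lemma picard_map_contraction p p' K : B_lipschitz p -> B_lipschitz p' ->
  (forall s, dist_at p p' s <= K * exp (4 * L * Rabs s)) ->
  forall t, dist_at (picard_map p) (picard_map p') t <= K / 2 * exp (4 * L * Rabs t).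
Proof.
  intros Hp Hp' Hd t.
  assert (Hcomp : forall G x1, lipschitz2_with G L ->
    Rabs (x1 + RInt (fun s => G (fst p s) (snd p s)) 0 t
          - (x1 + RInt (fun s => G (fst p' s) (snd p' s)) 0 t))
    <= K / 4 * exp (4 * L * Rabs t)).
  { intros G x1 HG.
    pose proof (continuous_along G p HG Hp) as Hc.
    pose proof (continuous_along G p' HG Hp') as Hc'.
    assert (Hminus : x1 + RInt (fun s => G (fst p s) (snd p s)) 0 t
          - (x1 + RInt (fun s => G (fst p' s) (snd p' s)) 0 t)
        = RInt (fun s => G (fst p s) (snd p s) - G (fst p' s) (snd p' s)) 0 t).
    { rewrite (RInt_minus (V := R_CompleteNormedModule));
        [| apply ex_RInt_continuous_R, Hc | apply ex_RInt_continuous_R, Hc'].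
      unfold minus, plus, opp; simpl; ring. }
    rewrite Hminus.
    replace (K / 4 * exp (4 * L * Rabs t)) with (L * K * exp (4 * L * Rabs t) / (4 * L))
      by (field; lra).
    apply abs_RInt_le_exp; [lra | |].
    - intros s. apply (continuous_minus (V := R_NormedModule)); [apply Hc | apply Hc'].
    - intros s. eapply Rle_trans; [apply HG|]. rewrite Rmult_assoc.
      apply Rmult_le_compat_l; [lra | apply Hd]. }
  unfold dist_at; simpl.
  pose proof (Hcomp G1 x0 G1_lipschitz). pose proof (Hcomp G2 y0 G2_lipschitz). lra.
Qed.

Lemma picard_iter_step n t :
  dist_at (picard_iter (S n)) (picard_iter n) t <= B / L * (1 / 2) ^ n * exp (4 * L * Rabs t).
Proof.
  revert t. induction n as [|n IH]; intros t.
  - assert (Hfirst : forall G x1, (forall x y, Rabs (G x y) <= B) ->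
        Rabs (x1 + RInt (fun s => G x0 y0) 0 t - x1) <= B * exp (4 * L * Rabs t) / (4 * L)).
    { intros G x1 HGB. rewrite Rplus_minus_l.
      apply abs_RInt_le_exp; [lra | intros; apply continuous_const |].
      intros s. pose proof (exp_ineq1_le (4 * L * Rabs s)).
      assert (0 <= 4 * L * Rabs s) by (pose proof (Rabs_pos s); nra).
      pose proof B_ge0. specialize (HGB x0 y0). nra. }
    unfold dist_at; simpl.
    pose proof (Hfirst G1 x0 (fun x y => proj1 (G_bounded x y))).
    pose proof (Hfirst G2 y0 (fun x y => proj2 (G_bounded x y))).
    assert (0 <= B * exp (4 * L * Rabs t) / (4 * L)).
    { pose proof B_ge0. pose proof (exp_pos (4 * L * Rabs t)).
      apply Rdiv_le_0_compat; [nra | lra]. }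
    replace (B / L * 1 * exp (4 * L * Rabs t)) with (4 * (B * exp (4 * L * Rabs t) / (4 * L)))
      by (field; lra).
    lra.
  - replace (B / L * (1 / 2) ^ S n) with (B / L * (1 / 2) ^ n / 2) by (simpl; field; lra).
    apply (picard_map_contraction (picard_iter (S n)) (picard_iter n));
      auto using picard_iter_lipschitz.
Qed.

Lemma picard_iter_cauchy n m t : (n <= m)%nat ->
  dist_at (picard_iter m) (picard_iter n) t <= 2 * (B / L) * (1 / 2) ^ n * exp (4 * L * Rabs t).
Proof.
  intros Hnm. set (e := exp (4 * L * Rabs t)).
  assert (Htelescope : forall k, dist_at (picard_iter (n + k)) (picard_iter n) t
                           <= 2 * (B / L) * ((1 / 2) ^ n - (1 / 2) ^ (n + k)) * e).
  { induction k as [|k IH].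
    - rewrite Nat.add_0_r. unfold dist_at. rewrite !Rminus_diag, Rabs_R0. lra.
    - rewrite Nat.add_succ_r.
      pose proof (dist_at_triangle (picard_iter (S (n + k))) (picard_iter (n + k))
                                   (picard_iter n) t).
      pose proof (picard_iter_step (n + k) t) as Hstep. fold e in Hstep.
      replace ((1 / 2) ^ S (n + k)) with ((1 / 2) * (1 / 2) ^ (n + k)) by (simpl; ring).
      lra. }
  replace m with (n + (m - n))%nat by lia.
  eapply Rle_trans; [apply Htelescope|].
  assert (0 <= B / L) by (apply Rdiv_le_0_compat; [apply B_ge0 | lra]).
  assert (0 <= (1 / 2) ^ (n + (m - n))) by (apply pow_le; lra).
  pose proof (exp_pos (4 * L * Rabs t)) as He. fold e in He.
  assert (0 <= 2 * (B / L) * e) by nra. nra.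
Qed.

Definition picard_limit : (R -> R) * (R -> R) :=
  (fun t => real (Lim_seq (fun n => fst (picard_iter n) t)),
   fun t => real (Lim_seq (fun n => snd (picard_iter n) t))).

Lemma picard_iter_cvg t :
  is_lim_seq (fun n => fst (picard_iter n) t) (fst picard_limit t) /\
  is_lim_seq (fun n => snd (picard_iter n) t) (snd picard_limit t).
Proof.
  split; apply (geometric_cauchy_cvg _ (2 * (B / L) * exp (4 * L * Rabs t)));
    intros n m Hnm; pose proof (picard_iter_cauchy n m t Hnm); unfold dist_at in *;
    pose proof (Rabs_pos (fst (picard_iter m) t - fst (picard_iter n) t));
    pose proof (Rabs_pos (snd (picard_iter m) t - snd (picard_iter n) t)); lra.
Qed.

Lemma picard_limit_dist n t :
  dist_at picard_limit (picard_iter n) t <= 2 * (B / L) * (1 / 2) ^ n * exp (4 * L * Rabs t).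
Proof.
  destruct (picard_iter_cvg t) as [H1 H2].
  apply (is_lim_seq_le_loc (fun m => dist_at (picard_iter m) (picard_iter n) t)
           (fun _ => 2 * (B / L) * (1 / 2) ^ n * exp (4 * L * Rabs t))
           (dist_at picard_limit (picard_iter n) t)
           (2 * (B / L) * (1 / 2) ^ n * exp (4 * L * Rabs t)));
    [| now apply dist_at_cvg | apply is_lim_seq_const].
  exists n. intros m Hm. now apply picard_iter_cauchy.
Qed.

Lemma picard_limit_lipschitz : B_lipschitz picard_limit.
Proof.
  split.
  - apply (lipschitz_with_lim (fun n => fst (picard_iter n)) (fst picard_limit) B).
    + intros t. apply (proj1 (picard_iter_cvg t)).
    + intros n. apply (proj1 (picard_iter_lipschitz n)).
  - apply (lipschitz_with_lim (fun n => snd (picard_iter n)) (snd picard_limit) B).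
    + intros t. apply (proj2 (picard_iter_cvg t)).
    + intros n. apply (proj2 (picard_iter_lipschitz n)).
Qed.

Lemma picard_limit_fixed t : dist_at (picard_map picard_limit) picard_limit t = 0.
Proof.
  apply Rle_antisym; [|apply dist_at_ge0].
  apply (le_pow_half_le0 _ (2 * (B / L) * exp (4 * L * Rabs t))). intros n.
  pose proof (dist_at_triangle (picard_map picard_limit) (picard_iter (S n)) picard_limit t).
  pose proof (picard_map_contraction picard_limit (picard_iter n) (2 * (B / L) * (1 / 2) ^ n)
    picard_limit_lipschitz (picard_iter_lipschitz n) (picard_limit_dist n) t) as Hcontr.
  pose proof (picard_limit_dist (S n) t) as Htail. rewrite dist_at_sym in Htail.
  change (picard_map (picard_iter n)) with (picard_iter (S n)) in Hcontr.
  replace ((1 / 2) ^ S n) with ((1 / 2) * (1 / 2) ^ n) in Htail by (simpl; ring).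
  lra.
Qed.

Theorem picard_global_solution : exists u v : R -> R,
  u 0 = x0 /\ v 0 = y0 /\
  forall t, is_derive u t (G1 (u t) (v t)) /\ is_derive v t (G2 (u t) (v t)).
Proof.
  set (u := fst picard_limit). set (v := snd picard_limit).
  assert (Hfix : forall t, u t = x0 + RInt (fun s => G1 (u s) (v s)) 0 t /\
                           v t = y0 + RInt (fun s => G2 (u s) (v s)) 0 t).
  { intros t. pose proof (picard_limit_fixed t) as Hfixed.
    unfold dist_at, picard_map in Hfixed; cbn [fst snd] in Hfixed; fold u v in Hfixed.
    pose proof (Rabs_pos (x0 + RInt (fun s => G1 (u s) (v s)) 0 t - u t)).
    pose proof (Rabs_pos (y0 + RInt (fun s => G2 (u s) (v s)) 0 t - v t)).
    split; apply Rminus_diag_uniq_sym, Rabs_eq_0; lra. }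
  exists u, v. split; [|split].
  - rewrite (proj1 (Hfix 0)), RInt_point. unfold zero; simpl. ring.
  - rewrite (proj2 (Hfix 0)), RInt_point. unfold zero; simpl. ring.
  - intros t. split.
    + apply (is_derive_ext (fun b => x0 + RInt (fun s => G1 (u s) (v s)) 0 b));
        [intros b; symmetry; apply (proj1 (Hfix b))|].
      apply (is_derive_RInt_0 (fun s => G1 (u s) (v s))), continuous_along;
        auto using picard_limit_lipschitz.
    + apply (is_derive_ext (fun b => y0 + RInt (fun s => G2 (u s) (v s)) 0 b));
        [intros b; symmetry; apply (proj2 (Hfix b))|].
      apply (is_derive_RInt_0 (fun s => G2 (u s) (v s))), continuous_along;
        auto using picard_limit_lipschitz.
Qed.

End Picard.

Lemma is_derive_affine2 (u v : R -> R) du dv a b k t :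
  is_derive u t du -> is_derive v t dv ->
  is_derive (fun s => k - (a * u s + b * v s)) t (- (a * du + b * dv)).
Proof.
  intros Hu Hv.
  pose proof (is_derive_minus _ _ t _ _ (is_derive_const k t)
    (is_derive_plus _ _ t _ _ (is_derive_scal _ t a du Hu) (is_derive_scal _ t b dv Hv))) as Hd.
  unfold minus, plus, opp, scal, zero in Hd; simpl in Hd; unfold mult in Hd; simpl in Hd.
  replace (- (a * du + b * dv)) with (0 + - (a * du + b * dv)) by ring. exact Hd.
Qed.

Definition clamp (M z : R) : R := Rmin M (Rmax 0 z).

Lemma clamp_range M z : 0 <= M -> 0 <= clamp M z <= M.
Proof. intros. unfold clamp, Rmin, Rmax. repeat destruct Rle_dec; lra. Qed.

Lemma clamp_id M z : 0 <= z <= M -> clamp M z = z.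
Proof. intros. unfold clamp, Rmin, Rmax. repeat destruct Rle_dec; lra. Qed.

Lemma clamp_of_le0 M z : 0 <= M -> z <= 0 -> clamp M z = 0.
Proof. intros. unfold clamp, Rmin, Rmax. repeat destruct Rle_dec; lra. Qed.

Lemma clamp_idem M z : 0 <= M -> clamp M (clamp M z) = clamp M z.
Proof. intros. now apply clamp_id, clamp_range. Qed.

Lemma clamp_lipschitz M : lipschitz_with (clamp M) 1.
Proof.
  intros x y. rewrite Rmult_1_l.
  unfold clamp, Rmin, Rmax, Rabs. repeat destruct Rle_dec; repeat destruct Rcase_abs; lra.
Qed.

Lemma clamp_add_ge M u v : 0 <= M -> 0 <= u -> 0 <= v ->
  Rmin M (u + v) <= clamp M u + clamp M v.
Proof. intros. unfold clamp, Rmin, Rmax. repeat destruct Rle_dec; lra. Qed.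

Definition quartic (x : R) : R := Rabs x ^ 3 * x.

Lemma quartic_nonneg x : 0 <= x -> quartic x = x ^ 4.
Proof. intros Hx. unfold quartic. rewrite Rabs_pos_eq by exact Hx. ring. Qed.

Lemma quartic_lipschitz_on M a b : 0 <= a <= M -> 0 <= b <= M ->
  Rabs (quartic a - quartic b) <= 4 * M ^ 3 * Rabs (a - b).
Proof.
  intros Ha Hb. rewrite !quartic_nonneg by lra.
  replace (a ^ 4 - b ^ 4) with ((a - b) * ((a + b) * (a * a + b * b))) by ring.
  rewrite Rabs_mult, Rmult_comm. apply Rmult_le_compat_r; [apply Rabs_pos|].
  rewrite Rabs_pos_eq by nra.
  replace (4 * M ^ 3) with ((2 * M) * (2 * (M * M))) by ring.
  apply Rmult_le_compat; nra.
Qed.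

Lemma quartic_clamp_lipschitz M : 0 <= M ->
  lipschitz_with (fun x => quartic (clamp M x)) (4 * M ^ 3).
Proof.
  intros HM x y. eapply Rle_trans; [apply quartic_lipschitz_on; now apply clamp_range|].
  apply Rmult_le_compat_l; [pose proof (pow_le M 3 HM); lra|].
  pose proof (clamp_lipschitz M x y). lra.
Qed.

Lemma globally_lipschitz_plus f g : globally_lipschitz f -> globally_lipschitz g ->
  globally_lipschitz (fun x => f x + g x).
Proof.
  intros (Kf & HKf & Hf) (Kg & HKg & Hg). exists (Kf + Kg). split; [lra|]. intros x y.
  replace (f x + g x - (f y + g y)) with ((f x - f y) + (g x - g y)) by ring.
  eapply Rle_trans; [apply Rabs_triang|]. specialize (Hf x y). specialize (Hg x y). lra.
Qed.

Lemma globally_lipschitz_scal k f : globally_lipschitz f ->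
  globally_lipschitz (fun x => k * f x).
Proof.
  intros (K & HK & Hf). exists (Rabs k * K). split; [pose proof (Rabs_pos k); nra|].
  intros x y. rewrite <- Rmult_minus_distr_l, Rabs_mult, Rmult_assoc.
  apply Rmult_le_compat_l; [apply Rabs_pos | apply Hf].
Qed.

Lemma globally_lipschitz_comp f g : globally_lipschitz f -> globally_lipschitz g ->
  globally_lipschitz (fun x => f (g x)).
Proof.
  intros (Kf & HKf & Hf) (Kg & HKg & Hg). exists (Kf * Kg). split; [nra|]. intros x y.
  eapply Rle_trans; [apply Hf|]. rewrite Rmult_assoc. apply Rmult_le_compat_l; [lra | apply Hg].
Qed.

Lemma lipschitz2_separable f g : globally_lipschitz f -> globally_lipschitz g ->
  exists L, 0 < L /\ lipschitz2_with (fun x y => f x + g y) L.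
Proof.
  intros (Kf & HKf & Hf) (Kg & HKg & Hg). exists (Kf + Kg + 1). split; [lra|].
  intros x y x' y'.
  replace (f x + g y - (f x' + g y')) with ((f x - f x') + (g y - g y')) by ring.
  eapply Rle_trans; [apply Rabs_triang|]. specialize (Hf x x'). specialize (Hg y y').
  pose proof (Rabs_pos (x - x')). pose proof (Rabs_pos (y - y')). nra.
Qed.

Lemma lipschitz2_with_ext G G' L : (forall x y, G x y = G' x y) ->
  lipschitz2_with G L -> lipschitz2_with G' L.
Proof. intros E HG x y x' y'. rewrite <- !E. apply HG. Qed.

Lemma lipschitz2_with_le G L L' : L <= L' -> lipschitz2_with G L -> lipschitz2_with G L'.
Proof.
  intros HL HG x y x' y'. eapply Rle_trans; [apply HG|].
  pose proof (Rabs_pos (x - x')). pose proof (Rabs_pos (y - y')). nra.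
Qed.

Lemma lipschitz2_clamp_bounded G L M : 0 <= M -> lipschitz2_with G L ->
  (forall x y, G x y = G (clamp M x) (clamp M y)) ->
  forall x y, Rabs (G x y) <= Rabs (G 0 0) + 2 * L * M.
Proof.
  intros HM HG Hclamp x y. rewrite Hclamp.
  pose proof (lipschitz2_with_ge0 G L HG).
  pose proof (clamp_range M x HM). pose proof (clamp_range M y HM).
  specialize (HG (clamp M x) (clamp M y) 0 0). rewrite !Rminus_0_r in HG.
  rewrite (Rabs_pos_eq (clamp M x)), (Rabs_pos_eq (clamp M y)) in HG by lra.
  pose proof (Rabs_triang_inv (G (clamp M x) (clamp M y)) (G 0 0)). nra.
Qed.

Lemma globally_lipschitz_affine_bound f : globally_lipschitz f ->
  exists K, 0 <= K /\ forall x, 0 <= x -> f x <= f 0 + K * x.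
Proof.
  intros (K & HK & Hf). exists K. split; [exact HK|]. intros x Hx.
  specialize (Hf x 0). rewrite Rminus_0_r, (Rabs_pos_eq x) in Hf by exact Hx.
  pose proof (Rle_abs (f x - f 0)). lra.
Qed.

Lemma quartic_dominates_affine A0 A1 d : 0 <= A0 -> 0 <= A1 -> 0 < d ->
  exists R0, 0 <= R0 /\ forall a b, 0 <= a -> 0 <= b -> R0 <= a + b ->
    A0 + A1 * (a + b) <= d * (a ^ 4 + b ^ 4).
Proof.
  intros HA0 HA1 Hd. set (W := A0 + 2 * A1).
  assert (HW : 0 <= W / d) by (apply Rdiv_le_0_compat; unfold W; lra).
  exists (2 * (1 + W / d)). split; [lra|]. intros a b Ha Hb Hab.
  (* with [r = max a b]:  A0 + A1 (a + b) <= W r <= d r^4 <= d (a^4 + b^4) *)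
  set (r := Rmax a b).
  assert (Hr : a <= r /\ b <= r /\ (r = a \/ r = b)).
  { unfold r, Rmax. destruct Rle_dec; lra. }
  assert (Hdr : d + W <= d * r) by (replace (d + W) with (d * (1 + W / d)) by (field; lra); nra).
  assert (Hr1 : 1 <= r) by nra.
  assert (Hr3 : r <= r ^ 3) by (simpl; nra).
  assert (Hr4 : r ^ 4 <= a ^ 4 + b ^ 4).
  { assert (0 <= a ^ 4) by (apply pow_le; lra). assert (0 <= b ^ 4) by (apply pow_le; lra).
    destruct Hr as (_ & _ & [-> | ->]); lra. }
  assert (HWr : A0 + A1 * (a + b) <= W * r) by (unfold W; nra).
  assert (W * r <= d * r ^ 4).
  { replace (r ^ 4) with (r * r ^ 3) by ring. assert (W <= d * r) by lra.
    assert (0 <= W) by (unfold W; lra). nra. }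
  nra.
Qed.

Section TwoLayerModel.

Context {gamma_a gamma_s lambda q sigmaB eps_a : R} {beta_a beta_s : R -> R}.
Hypotheses (Hga : 0 < gamma_a) (Hgs : 0 < gamma_s) (Hl : 0 <= lambda) (Hq : 0 < q)
  (Hs : 0 < sigmaB) (He : 0 < eps_a < 2)
  (Hba : globally_lipschitz beta_a) (Hbs : globally_lipschitz beta_s)
  (Hba0 : forall x, 0 <= beta_a x) (Hbs0 : forall x, 0 < beta_s x).

Definition rhs_a (x y : R) : R :=
  - lambda * (x - y) + eps_a * sigmaB * quartic y
  - 2 * eps_a * sigmaB * quartic x + q * beta_a x.

Definition rhs_s (x y : R) : R :=
  - lambda * (y - x) - sigmaB * quartic y + eps_a * sigmaB * quartic x + q * beta_s y.

(* The midpoint of (eps_a, 2): any weight in that interval makes both quartic terms of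
   [rhs_a + energy_weight * rhs_s] negative. *)
Definition energy_weight : R := (eps_a + 2) / 2.

Definition energy (x y : R) : R := gamma_a * x + energy_weight * gamma_s * y.

Lemma energy_le_components x y K : 0 <= x -> 0 <= y -> energy x y <= K ->
  x <= K / gamma_a /\ y <= K / (energy_weight * gamma_s).
Proof.
  intros Hx Hy HE. unfold energy in HE.
  assert (Hw : 0 < energy_weight * gamma_s) by (unfold energy_weight; nra).
  split.
  - apply (Rmult_le_reg_r gamma_a); [exact Hga|].
    unfold Rdiv. rewrite Rmult_assoc, Rinv_l, Rmult_1_r by lra. nra.
  - apply (Rmult_le_reg_r (energy_weight * gamma_s)); [exact Hw|].
    unfold Rdiv. rewrite Rmult_assoc, Rinv_l, Rmult_1_r by lra. nra.
Qed.

Lemma rhs_a_nonneg_at_0 y : 0 <= y -> 0 <= rhs_a 0 y.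
Proof.
  intros Hy. unfold rhs_a. rewrite (quartic_nonneg 0), (quartic_nonneg y) by lra.
  pose proof (pow_le y 4 Hy). pose proof (Hba0 0).
  assert (0 <= eps_a * sigmaB * y ^ 4) by (apply Rmult_le_pos; nra).
  nra.
Qed.

Lemma rhs_s_nonneg_at_0 x : 0 <= x -> 0 <= rhs_s x 0.
Proof.
  intros Hx. unfold rhs_s. rewrite (quartic_nonneg 0), (quartic_nonneg x) by lra.
  pose proof (pow_le x 4 Hx). pose proof (Hbs0 0).
  assert (0 <= eps_a * sigmaB * x ^ 4) by (apply Rmult_le_pos; nra).
  nra.
Qed.

Lemma rhs_energy_identity a b : 0 <= a -> 0 <= b ->
  rhs_a a b + energy_weight * rhs_s a b =
  lambda * (energy_weight - 1) * (a - b) - sigmaB * (2 - eps_a) / 2 * (b ^ 4 + eps_a * a ^ 4)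
  + q * beta_a a + energy_weight * q * beta_s b.
Proof.
  intros Ha Hb. unfold rhs_a, rhs_s, energy_weight.
  rewrite !quartic_nonneg by assumption. field.
Qed.

Lemma energy_dissipative : exists R0, 0 <= R0 /\
  forall a b, 0 <= a -> 0 <= b -> R0 <= a + b -> rhs_a a b + energy_weight * rhs_s a b <= 0.
Proof.
  destruct (globally_lipschitz_affine_bound beta_a Hba) as (Ka & HKa & Hbeta_a_affine).
  destruct (globally_lipschitz_affine_bound beta_s Hbs) as (Ks & HKs & Hbeta_s_affine).
  set (c := energy_weight).
  assert (Hc : 1 < c < 2) by (unfold c, energy_weight; lra).
  set (m := Rmin 1 eps_a).
  assert (Hm : 0 < m /\ m <= 1 /\ m <= eps_a).
  { unfold m. repeat split; [apply Rmin_pos; lra | apply Rmin_l | apply Rmin_r]. }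
  pose proof (Hba0 0). pose proof (Hbs0 0).
  destruct (quartic_dominates_affine (q * (beta_a 0 + c * beta_s 0))
              (lambda + q * (Ka + c * Ks)) (sigmaB * (2 - eps_a) / 2 * m))
    as (R0 & HR0 & Hdom).
  { apply Rmult_le_pos; nra. }
  { assert (0 <= q * (Ka + c * Ks)) by (apply Rmult_le_pos; nra). lra. }
  { apply Rmult_lt_0_compat; [apply Rdiv_lt_0_compat; nra | lra]. }
  exists R0. split; [exact HR0|]. intros a b Ha Hb Hab.
  rewrite rhs_energy_identity by assumption. fold c.
  specialize (Hdom a b Ha Hb Hab).
  assert (Hquart : m * (a ^ 4 + b ^ 4) <= b ^ 4 + eps_a * a ^ 4).
  { pose proof (pow_le a 4 Ha). pose proof (pow_le b 4 Hb). nra. }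
  assert (Hcoupling : lambda * (c - 1) * (a - b) <= lambda * (a + b)).
  { assert ((c - 1) * (a - b) <= a + b) by nra.
    rewrite Rmult_assoc. apply Rmult_le_compat_l; assumption. }
  specialize (Hbeta_a_affine a Ha). specialize (Hbeta_s_affine b Hb).
  assert (0 < sigmaB * (2 - eps_a) / 2) by (apply Rdiv_lt_0_compat; nra).
  assert (q * beta_a a <= q * (beta_a 0 + Ka * a)) by (apply Rmult_le_compat_l; lra).
  assert (c * q * beta_s b <= c * q * (beta_s 0 + Ks * b))
    by (apply Rmult_le_compat_l; [nra | lra]).
  assert (q * Ka * a + c * q * Ks * b <= q * (Ka + c * Ks) * (a + b)).
  { assert (0 <= q * Ka * b) by (repeat apply Rmult_le_pos; lra).
    assert (0 <= c * q * Ks * a) by (repeat apply Rmult_le_pos; lra). nra. }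
  assert (sigmaB * (2 - eps_a) / 2 * m * (a ^ 4 + b ^ 4)
          <= sigmaB * (2 - eps_a) / 2 * (b ^ 4 + eps_a * a ^ 4))
    by (rewrite Rmult_assoc; apply Rmult_le_compat_l; lra).
  nra.
Qed.

Section Truncation.

Variable M : R.
Hypothesis M_ge0 : 0 <= M.

Definition trunc_a (x y : R) : R := rhs_a (clamp M x) (clamp M y) / gamma_a.
Definition trunc_s (x y : R) : R := rhs_s (clamp M x) (clamp M y) / gamma_s.

Definition solves_truncated (u v : R -> R) : Prop :=
  forall t, is_derive u t (trunc_a (u t) (v t)) /\ is_derive v t (trunc_s (u t) (v t)).

Lemma truncated_lipschitz :
  exists L, 0 < L /\ lipschitz2_with trunc_a L /\ lipschitz2_with trunc_s L.
Proof.
  assert (Hclamp : globally_lipschitz (clamp M)).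
  { exists 1. split; [lra | apply clamp_lipschitz]. }
  assert (Hquartic : globally_lipschitz (fun x => quartic (clamp M x))).
  { exists (4 * M ^ 3). split; [pose proof (pow_le M 3 M_ge0); lra|].
    now apply quartic_clamp_lipschitz. }
  destruct (lipschitz2_separable
    (fun x => / gamma_a * (- lambda * clamp M x
              + (- (2 * eps_a * sigmaB) * quartic (clamp M x) + q * beta_a (clamp M x))))
    (fun y => / gamma_a * (lambda * clamp M y + eps_a * sigmaB * quartic (clamp M y))))
    as (La & HLa & HLip_a).
  1-2: repeat (apply globally_lipschitz_scal || apply globally_lipschitz_plus);
       auto using globally_lipschitz_comp.
  destruct (lipschitz2_separable
    (fun x => / gamma_s * (lambda * clamp M x + eps_a * sigmaB * quartic (clamp M x)))
    (fun y => / gamma_s * (- lambda * clamp M y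
              + (- sigmaB * quartic (clamp M y) + q * beta_s (clamp M y)))))
    as (Ls & HLs & HLip_s).
  1-2: repeat (apply globally_lipschitz_scal || apply globally_lipschitz_plus);
       auto using globally_lipschitz_comp.
  exists (La + Ls). repeat split; [lra | |].
  - apply (lipschitz2_with_le _ La); [lra|].
    eapply lipschitz2_with_ext; [|exact HLip_a]. intros x y. unfold trunc_a, rhs_a. field. lra.
  - apply (lipschitz2_with_le _ Ls); [lra|].
    eapply lipschitz2_with_ext; [|exact HLip_s]. intros x y. unfold trunc_s, rhs_s. field. lra.
Qed.

Lemma truncated_global_solution x0 y0 : exists u v : R -> R,
  u 0 = x0 /\ v 0 = y0 /\ solves_truncated u v.
Proof.
  destruct truncated_lipschitz as (L & HL & HLip_a & HLip_s).
  set (B := Rabs (trunc_a 0 0) + Rabs (trunc_s 0 0) + 2 * L * M).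
  apply (picard_global_solution trunc_a trunc_s L B); auto.
  assert (Hbound_a : forall x y, Rabs (trunc_a x y) <= Rabs (trunc_a 0 0) + 2 * L * M).
  { apply (lipschitz2_clamp_bounded _ L M M_ge0 HLip_a).
    intros x y. unfold trunc_a. now rewrite !clamp_idem by exact M_ge0. }
  assert (Hbound_s : forall x y, Rabs (trunc_s x y) <= Rabs (trunc_s 0 0) + 2 * L * M).
  { apply (lipschitz2_clamp_bounded _ L M M_ge0 HLip_s).
    intros x y. unfold trunc_s. now rewrite !clamp_idem by exact M_ge0. }
  intros x y. pose proof (Rabs_pos (trunc_a 0 0)). pose proof (Rabs_pos (trunc_s 0 0)).
  specialize (Hbound_a x y). specialize (Hbound_s x y). unfold B. split; lra.
Qed.

Lemma truncated_solution_nonneg u v :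
  solves_truncated u v -> 0 <= u 0 -> 0 <= v 0 -> forall t, 0 <= t -> 0 <= u t /\ 0 <= v t.
Proof.
  intros Hsol Hu0 Hv0 t Ht. split.
  - apply (nonneg_invariant u (fun t => trunc_a (u t) (v t))); auto; [apply Hsol|].
    intros s _ Hus. unfold trunc_a. rewrite (clamp_of_le0 M (u s)) by assumption.
    apply Rdiv_le_0_compat; [|exact Hga]. apply rhs_a_nonneg_at_0, clamp_range, M_ge0.
  - apply (nonneg_invariant v (fun t => trunc_s (u t) (v t))); auto; [apply Hsol|].
    intros s _ Hvs. unfold trunc_s. rewrite (clamp_of_le0 M (v s)) by assumption.
    apply Rdiv_le_0_compat; [|exact Hgs]. apply rhs_s_nonneg_at_0, clamp_range, M_ge0.
Qed.

Lemma truncated_energy_le u v R0 K :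
  solves_truncated u v -> (forall t, 0 <= t -> 0 <= u t /\ 0 <= v t) ->
  (forall a b, 0 <= a -> 0 <= b -> R0 <= a + b -> rhs_a a b + energy_weight * rhs_s a b <= 0) ->
  R0 <= M -> (gamma_a + energy_weight * gamma_s) * R0 <= K -> energy (u 0) (v 0) <= K ->
  forall t, 0 <= t -> energy (u t) (v t) <= K.
Proof.
  intros Hsol Hnn Hdiss HR0M HK HE0 t Ht.
  assert (Hc : 1 < energy_weight) by (unfold energy_weight; lra).
  enough (0 <= K - energy (u t) (v t)) by lra.
  apply (nonneg_invariant (fun s => K - energy (u s) (v s))
    (fun s => - (gamma_a * trunc_a (u s) (v s) + energy_weight * gamma_s * trunc_s (u s) (v s))));
    [| lra | | exact Ht].
  { intros s. apply is_derive_affine2; apply Hsol. }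
  intros s Hs_ge0 HEs. destruct (Hnn s Hs_ge0) as [Hus Hvs].
  pose proof (clamp_add_ge M (u s) (v s) M_ge0 Hus Hvs) as Hclamp_sum.
  set (a := clamp M (u s)) in *. set (b := clamp M (v s)) in *.
  assert (Hdecay : rhs_a a b + energy_weight * rhs_s a b <= 0).
  { apply Hdiss; [apply clamp_range, M_ge0 | apply clamp_range, M_ge0 |].
    assert (Huv : R0 <= u s + v s).
    { unfold energy in HEs.
      assert (0 < gamma_a + energy_weight * gamma_s) by nra.
      assert (0 <= gamma_a * v s) by (apply Rmult_le_pos; lra).
      assert (0 <= energy_weight * gamma_s * u s) by (repeat apply Rmult_le_pos; lra).
      assert (gamma_a * u s + energy_weight * gamma_s * v s
              <= (gamma_a + energy_weight * gamma_s) * (u s + v s)) by nra.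
      nra. }
    unfold Rmin in Hclamp_sum. destruct Rle_dec; lra. }
  unfold trunc_a, trunc_s. fold a b.
  replace (gamma_a * (rhs_a a b / gamma_a) + energy_weight * gamma_s * (rhs_s a b / gamma_s))
    with (rhs_a a b + energy_weight * rhs_s a b) by (field; lra).
  lra.
Qed.

End Truncation.

Lemma nonneg_global_solution Ta0 Ts0 : 0 <= Ta0 -> 0 <= Ts0 ->
  exists Ta Ts : R -> R, Ta 0 = Ta0 /\ Ts 0 = Ts0 /\
    forall t, 0 <= t -> is_derive Ta t (rhs_a (Ta t) (Ts t) / gamma_a) /\
                        is_derive Ts t (rhs_s (Ta t) (Ts t) / gamma_s).
Proof.
  intros HTa0 HTs0.
  destruct energy_dissipative as (R0 & HR0 & Hdiss).
  assert (Hc : 1 < energy_weight) by (unfold energy_weight; lra).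
  set (K := Rmax (energy Ta0 Ts0) ((gamma_a + energy_weight * gamma_s) * R0)).
  assert (HK : 0 <= K).
  { apply (Rle_trans _ ((gamma_a + energy_weight * gamma_s) * R0));
      [apply Rmult_le_pos; nra | apply Rmax_r]. }
  assert (HKa : 0 <= K / gamma_a) by (apply Rdiv_le_0_compat; lra).
  assert (HKs : 0 <= K / (energy_weight * gamma_s)) by (apply Rdiv_le_0_compat; nra).
  set (M := R0 + K / gamma_a + K / (energy_weight * gamma_s) + 1).
  assert (HM : 0 <= M) by (unfold M; lra).
  destruct (truncated_global_solution M HM Ta0 Ts0) as (u & v & Hu0 & Hv0 & Hsol).
  pose proof (truncated_solution_nonneg M HM u v Hsol ltac:(lra) ltac:(lra)) as Hnn.
  assert (HE : forall t, 0 <= t -> energy (u t) (v t) <= K).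
  { apply (truncated_energy_le M HM u v R0 K Hsol Hnn Hdiss).
    - unfold M. lra.
    - apply Rmax_r.
    - rewrite Hu0, Hv0. apply Rmax_l. }
  exists u, v. split; [exact Hu0|]. split; [exact Hv0|]. intros t Ht.
  destruct (Hnn t Ht) as [Hut Hvt].
  destruct (energy_le_components (u t) (v t) K Hut Hvt (HE t Ht)) as [Hu_le Hv_le].
  destruct (Hsol t) as [Du Dv]. unfold trunc_a, trunc_s in Du, Dv.
  rewrite (clamp_id M (u t)), (clamp_id M (v t)) in Du, Dv by (unfold M; lra).
  split; assumption.
Qed.

End TwoLayerModel.

Theorem corollary4p3
  (gamma_a gamma_s lambda q sigmaB eps_a : R)
  (beta_a beta_s : R -> R) (Ta0 Ts0 : R)
  (Hga : 0 < gamma_a) (Hgs : 0 < gamma_s) (Hl : 0 <= lambda) (Hq : 0 < q)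
  (Hs : 0 < sigmaB) (He : 0 < eps_a < 2)
  (Hba : globally_lipschitz beta_a) (Hbs : globally_lipschitz beta_s)
  (Hba0 : forall x, 0 <= beta_a x) (Hbs0 : forall x, 0 < beta_s x)
  (HTa0 : 0 <= Ta0) (HTs0 : 0 <= Ts0) :
  exists Ta Ts : R -> R,
    Ta 0 = Ta0 /\ Ts 0 = Ts0 /\
    forall t : R, 0 <= t ->
      ex_derive Ta t /\ ex_derive Ts t /\
      gamma_a * Derive Ta t =
        - lambda * (Ta t - Ts t) + eps_a * sigmaB * (Rabs (Ts t) ^ 3 * Ts t)
        - 2 * eps_a * sigmaB * (Rabs (Ta t) ^ 3 * Ta t) + q * beta_a (Ta t) /\
      gamma_s * Derive Ts t =
        - lambda * (Ts t - Ta t) - sigmaB * (Rabs (Ts t) ^ 3 * Ts t)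
        + eps_a * sigmaB * (Rabs (Ta t) ^ 3 * Ta t) + q * beta_s (Ts t).
Proof.
  destruct (nonneg_global_solution Hga Hgs Hl Hq Hs He Hba Hbs Hba0 Hbs0 Ta0 Ts0 HTa0 HTs0)
    as (Ta & Ts & HTa & HTs & Hsol).
  exists Ta, Ts. split; [exact HTa|]. split; [exact HTs|]. intros t Ht.
  destruct (Hsol t Ht) as [Da Ds].
  split; [eexists; exact Da|]. split; [eexists; exact Ds|].
  rewrite (is_derive_unique _ _ _ Da), (is_derive_unique _ _ _ Ds).
  unfold rhs_a, rhs_s, quartic. split; field; lra.
Qed.
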